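(* Let $G$ be a group acting on a set $X$, and let $\alpha\in\,]0,1]$. (1) Let $A\subset G$ and $Y\subset X$ be nonempty, with $Y$ finite, such that $|A^{-1}\cdot Y|\leq\frac{3-\alpha}{2}|Y|$. Then $(AA^{-1})^{2}\subset\mathrm{Sym}_{\alpha}(Y)$ and $AA^{-1}\subset\mathrm{Sym}_{\alpha}(Y)$. (2) Let $(\rho,V)$ be a linear representation of $G$ on a finite-dimensional vector space $V$ over a field $k$. Let $A\subset G$ be nonempty and $W$ a nonzero finite-dimensional $k$-subspace of $V$ with $\dim\langle A^{-1}\cdot W\rangle\leq\frac{3-\alpha}{2}\dim W$. Then $(AA^{-1})^{2}\subset\mathrm{Sym}_{\alpha}(W)$.
   Context: For $A\subset G$, $A^{-1}=\{a^{-1}\mid a\in A\}$, $AA^{-1}=\{ab^{-1}\mid a,b\in A\}$ and $(AA^{-1})^2=\{uv\mid u,v\in AA^{-1}\}$. $A\cdot Y=\{a\cdot y\mid a\in A,y\in Y\}$; $\langle A\cdot W\rangle$ is the $k$-span of $\{a\cdot w\mid a\in A,w\in W\}$. For finite nonempty $Y\subset X$, $\mathrm{Sym}_{\alpha}(Y)=\{g\in G\mid |g\cdot Y\cap Y|\geq\alpha|Y|\}$; for a nonzero subspace $W$, $\mathrm{Sym}_{\alpha}(W)=\{g\in G\mid \dim(g\cdot W\cap W)\geq\alpha\dim W\}$. *)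

From HB Require Import structures.
From mathcomp Require Import all_boot all_algebra.
From Stdlib Require Import Reals List.
Set Implicit Arguments. Unset Strict Implicit. Unset Printing Implicit Defensive.

Definition is_group (G : Type) (mul : G -> G -> G) (inv : G -> G) (one : G) : Prop :=
  (forall a b c, mul a (mul b c) = mul (mul a b) c) /\
  (forall a, mul one a = a) /\ (forall a, mul a one = a) /\
  (forall a, mul (inv a) a = one) /\ (forall a, mul a (inv a) = one).

Definition is_action (G X : Type) (mul : G -> G -> G) (one : G) (act : G -> X -> X) : Prop :=
  (forall x, act one x = x) /\ (forall g h x, act (mul g h) x = act g (act h x)).

Definition set_inv (G : Type) (inv : G -> G) (A : G -> Prop) : G -> Prop :=
  fun g => exists a, A a /\ g = inv a.

Definition AAinv (G : Type) (mul : G -> G -> G) (inv : G -> G) (A : G -> Prop) : G -> Prop :=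
  fun g => exists a b, A a /\ A b /\ g = mul a (inv b).

Definition setsq (G : Type) (mul : G -> G -> G) (S : G -> Prop) : G -> Prop :=
  fun g => exists u v, S u /\ S v /\ g = mul u v.

Definition act_set (G X : Type) (act : G -> X -> X) (B : G -> Prop) (Y : X -> Prop) : X -> Prop :=
  fun y => exists b x, B b /\ Y x /\ y = act b x.

Definition card_is (T : Type) (S : T -> Prop) (n : nat) : Prop :=
  exists s : list T, NoDup s /\ length s = n /\ (forall x, S x <-> In x s).

Definition SymSet (G X : Type) (act : G -> X -> X) (alpha : R) (Y : X -> Prop) : G -> Prop :=
  fun g => exists n k, card_is Y n /\
     card_is (fun x => act_set act (fun h => h = g) Y x /\ Y x) k /\
     Rle (Rmult alpha (INR n)) (INR k).

Definition is_span_of (G : Type) (k : fieldType) (V : vectType k)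
    (rho : G -> 'End(V)) (B : G -> Prop) (W U : {vspace V}) : Prop :=
  (forall b w, B b -> w \in W -> rho b w \in U) /\
  (forall U' : {vspace V}, (forall b w, B b -> w \in W -> rho b w \in U') -> (U <= U')%VS).

Definition SymSpace (G : Type) (k : fieldType) (V : vectType k)
    (rho : G -> 'End(V)) (alpha : R) (W : {vspace V}) : G -> Prop :=
  fun g => Rle (Rmult alpha (INR (\dim W))) (INR (\dim ((rho g @: W) :&: W)%VS)).

Definition is_rep (G : Type) (mul : G -> G -> G) (one : G) (k : fieldType) (V : vectType k)
    (rho : G -> 'End(V)) : Prop :=
  rho one = \1%VF /\ (forall g h, rho (mul g h) = (rho g \o rho h)%VF).

(* For a, b in A the translates a^-1 Y and b^-1 Y lie in A^-1 Y, so they meet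
   in at least 2|Y| - |A^-1 Y| >= (1 + alpha)/2 |Y| points; translating by a,
   this is |ab^-1 Y ∩ Y|.  For a product uv, the sets u(vY ∩ Y) and uY ∩ Y
   both lie in uY and their intersection lies in uvY ∩ Y, whence
   |uvY ∩ Y| >= |uY ∩ Y| + |vY ∩ Y| - |Y| >= 3|Y| - 2|A^-1 Y| >= alpha |Y|.
   For subspaces the same argument runs with dimensions, the modular law
   dim (P + Q) + dim (P ∩ Q) = dim P + dim Q replacing inclusion-exclusion. *)

From HB Require Import structures.
From mathcomp Require Import all_boot all_algebra.
From mathcomp Require Import boolp classical_sets.
From Stdlib Require Import Reals List FinFun Lra.
From mathcomp Require Import zify.

Local Open Scope classical_set_scope.

Section FiniteCard.

Context {T : Type}.
Implicit Types A B C : set T.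

Lemma card_is_le {A B m n} : A `<=` B -> card_is A m -> card_is B n -> (m <= n)%N.
Proof.
move=> AB [s [us [<- As]]] [t [ut [<- Bt]]].
by apply/leP; apply: NoDup_incl_length => // x /As/AB/Bt.
Qed.

Lemma card_is_unique {A m n} : card_is A m -> card_is A n -> m = n.
Proof.
by move=> Am An; apply/eqP; rewrite eqn_leq (card_is_le _ Am An) ?(card_is_le _ An Am).
Qed.

Lemma card_is_filter {A s} : NoDup s -> A `<=` [set x | In x s] ->
  card_is A (length (List.filter (fun x => `[< A x >]) s)).
Proof.
move=> us As; exists (List.filter (fun x => `[< A x >]) s).
split; first exact: NoDup_filter.
split=> // x; rewrite filter_In.
by split=> [Ax | [_ /asboolP //]]; split; [exact: As | exact/asboolP].
Qed.

Lemma card_is_subset {A B n} : A `<=` B -> card_is B n -> exists m, card_is A m.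
Proof.
by move=> AB [s [us [_ Bs]]]; eexists; apply: (card_is_filter us) => x /AB/Bs.
Qed.

Lemma length_filter_predI_predU (p q : pred T) s :
  length (List.filter p s) + length (List.filter q s) =
  length (List.filter (predI p q) s) + length (List.filter (predU p q) s).
Proof. by elim: s => //= x s IHs; case: (p x); case: (q x) => /=; lia. Qed.

Lemma card_is_setI {A B C a b c} : A `<=` C -> B `<=` C ->
  card_is C c -> card_is A a -> card_is B b ->
  exists i, card_is (A `&` B) i /\ (a + b <= c + i)%N.
Proof.
move=> AC BC [s [us [<- Cs]]] Aa Bb.
have sub D : D `<=` C -> D `<=` [set x | In x s] by move=> DC x /DC/Cs.
have ABC : A `&` B `<=` C by move=> x [/AC].
eexists; split; first exact: (card_is_filter us (sub _ ABC)).
rewrite (card_is_unique Aa (card_is_filter us (sub _ AC))).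
rewrite (card_is_unique Bb (card_is_filter us (sub _ BC))).
rewrite length_filter_predI_predU addnC.
have -> : List.filter (fun x => `[< (A `&` B) x >]) s =
          List.filter (predI (fun x => `[< A x >]) (fun x => `[< B x >])) s.
  by apply: filter_ext => x; rewrite /= asbool_and.
by rewrite leq_add2r; apply/leP/filter_length_le.
Qed.

Lemma card_is_image {U : Type} {f : T -> U} {A n} :
  injective f -> card_is A n -> card_is (f @` A) n.
Proof.
move=> f_inj [s [us [<- As]]]; exists (map f s).
split; first exact: Injective_map_NoDup.
split; first exact: length_map.
by move=> y; rewrite in_map_iff; split=> [[x /As Ax <-] | [x [<- /As Ax]]];
  exists x.
Qed.

End FiniteCard.

Lemma image_setI_inj {T U : Type} {f : T -> U} (A B : set T) :
  injective f -> f @` (A `&` B) = f @` A `&` f @` B.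
Proof.
move=> f_inj; apply/seteqP; split=> [|_ [[x Ax <-] [y By /f_inj yx]]].
  exact: sub_image_setI.
by rewrite yx in By; exists x => //; split.
Qed.

Lemma INR_leq_add (a b c d : nat) :
  (a + b <= c + d)%N -> (INR a + INR b <= INR c + INR d)%R.
Proof. by move=> /leP/le_INR; rewrite !plus_INR. Qed.

Lemma alpha_le_overlap {alpha : R} {n m k : nat} : (alpha <= 1)%R ->
  (INR m <= (3 - alpha) / 2 * INR n)%R -> (n + n <= m + k)%N ->
  (alpha * INR n <= INR k)%R.
Proof. by move=> ? ? /INR_leq_add ?; have := pos_INR n; nra. Qed.

Lemma alpha_le_overlap_mul {alpha : R} {n m k1 k2 k : nat} :
  (INR m <= (3 - alpha) / 2 * INR n)%R ->
  (n + n <= m + k1)%N -> (n + n <= m + k2)%N -> (k1 + k2 <= n + k)%N ->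
  (alpha * INR n <= INR k)%R.
Proof. by move=> ? /INR_leq_add ? /INR_leq_add ? /INR_leq_add ?; lra. Qed.

Lemma mem_set_inv {G : Type} {inv : G -> G} {A : set G} {a : G} :
  A a -> set_inv inv A (inv a).
Proof. by exists a. Qed.

Section Group.

Context {G : Type} {mul : G -> G -> G} {inv : G -> G} {one : G}.
Hypothesis HG : is_group mul inv one.

Lemma mulgV g : mul g (inv g) = one.
Proof. by case: HG => _ [_ [_ [_ ->]]]. Qed.

Lemma mulVg g : mul (inv g) g = one.
Proof. by case: HG => _ [_ [_ [->]]]. Qed.

Section Action.

Context {X : Type} {act : G -> X -> X}.
Hypothesis Hact : is_action mul one act.

Lemma act_mul g h : act (mul g h) = act g \o act h.
Proof. by case: Hact => _ act_mul; apply/funext => x; rewrite act_mul. Qed.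

Lemma actK g : cancel (act g) (act (inv g)).
Proof. by case: Hact => act1 _ x; rewrite -[RHS]act1 -(mulVg g) act_mul. Qed.

Lemma act_inj g : injective (act g).
Proof. exact: can_inj (actK g). Qed.

Lemma image_act_mul g h (Y : set X) :
  act g @` (act h @` Y) = act (mul g h) @` Y.
Proof. by rewrite image_comp act_mul. Qed.

Lemma image_actVK g (Y : set X) : act g @` (act (inv g) @` Y) = Y.
Proof.
by rewrite image_act_mul mulgV; apply: eq_image_id => x _; case: Hact.
Qed.

Lemma act_set_pred1 g (Y : set X) : act_set act (fun h => h = g) Y = act g @` Y.
Proof.
apply/seteqP; split=> [_ [_ [y [-> [Yy ->]]]] | _ [y Yy <-]]; first by exists y.
by exists g, y.
Qed.

Lemma image_act_sub_act_set (B : set G) (Y : set X) g :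
  B g -> act g @` Y `<=` act_set act B Y.
Proof. by move=> Bg _ [y Yy <-]; exists g, y. Qed.

Context {Y : set X} {n : nat}.
Hypothesis HY : card_is Y n.

Lemma card_is_image_act g : card_is (act g @` Y) n.
Proof. exact: card_is_image (act_inj g) HY. Qed.

Lemma card_is_act_mulV {Z : set X} {m g h} : card_is Z m ->
  act (inv g) @` Y `<=` Z -> act (inv h) @` Y `<=` Z ->
  exists k, card_is (act (mul g (inv h)) @` Y `&` Y) k /\ (n + n <= m + k)%N.
Proof.
move=> HZ gYZ hYZ.
have [k [Hk le_nk]] :=
  card_is_setI gYZ hYZ HZ (card_is_image_act _) (card_is_image_act _).
exists k; split=> //.
have := card_is_image (act_inj g) Hk.
rewrite image_setI_inj; last exact: act_inj.
by rewrite image_actVK image_act_mul setIC.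
Qed.

Lemma card_is_act_mul {u v ku kv} :
  card_is (act u @` Y `&` Y) ku -> card_is (act v @` Y `&` Y) kv ->
  exists k, card_is (act (mul u v) @` Y `&` Y) k /\ (ku + kv <= n + k)%N.
Proof.
move=> Hku Hkv.
have uvY := card_is_image (act_inj u) Hkv.
rewrite image_setI_inj ?image_act_mul in uvY; last exact: act_inj.
have [i [Hi le_i]] := card_is_setI (@subIsetr _ _ _) (@subIsetl _ _ _)
  (card_is_image_act u) uvY Hku.
have [k Hk] := card_is_subset (@subIsetr _ (act (mul u v) @` Y) Y) HY.
exists k; split=> //; rewrite addnC; apply: (leq_trans le_i); rewrite leq_add2l.
by apply: card_is_le Hi Hk => x [[uvYx _] [_ Yx]]; split.
Qed.

Lemma SymSet_intro {alpha g k} : card_is (act g @` Y `&` Y) k ->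
  (alpha * INR n <= INR k)%R -> SymSet act alpha Y g.
Proof. by move=> Hk le_k; exists n, k; rewrite /setI act_set_pred1 in Hk *. Qed.

End Action.

Section Representation.

Context {K : fieldType} {V : vectType K} {rho : G -> 'End(V)}.
Hypothesis Hrho : is_rep mul one rho.

Lemma limg_rho_mul g h (U : {vspace V}) :
  (rho g @: (rho h @: U))%VS = (rho (mul g h) @: U)%VS.
Proof. by case: Hrho => _ rho_mul; rewrite rho_mul limg_comp. Qed.

Lemma limg_rhoVK g (U : {vspace V}) : (rho g @: (rho (inv g) @: U))%VS = U.
Proof. by case: Hrho => rho1 _; rewrite limg_rho_mul mulgV rho1 lim1g. Qed.

Lemma lker_rho g : lker (rho g) == 0%VS.
Proof.
apply/lker0P/(can_inj (g := rho (inv g))) => x.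
by case: Hrho => rho1 rho_mul; rewrite -comp_lfunE -rho_mul mulVg rho1 id_lfunE.
Qed.

Lemma dim_limg_rho g (U : {vspace V}) : \dim (rho g @: U) = \dim U.
Proof. by rewrite limg_dim_eq // (eqP (lker_rho g)) capv0. Qed.

Variable W : {vspace V}.

Lemma dim_cap_limg_mulV {U : {vspace V}} {g h} :
  (rho (inv g) @: W <= U)%VS -> (rho (inv h) @: W <= U)%VS ->
  (\dim W + \dim W <= \dim U + \dim ((rho (mul g (inv h)) @: W) :&: W))%N.
Proof.
move=> gWU hWU.
have le_sum : (\dim (rho (inv g) @: W + rho (inv h) @: W) <= \dim U)%N.
  by apply: dimvS; rewrite subv_add gWU hWU.
have := dimv_sum_cap (rho (inv g) @: W) (rho (inv h) @: W).
rewrite -(dim_limg_rho g (_ :&: _)) lker0_img_cap ?lker_rho //.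
rewrite limg_rhoVK limg_rho_mul capvC !dim_limg_rho.
by move=> <-; rewrite leq_add2r.
Qed.

Lemma dim_cap_limg_mul u v :
  (\dim ((rho u @: W) :&: W) + \dim ((rho v @: W) :&: W) <=
   \dim W + \dim ((rho (mul u v) @: W) :&: W))%N.
Proof.
set P := (rho u @: ((rho v @: W) :&: W))%VS.
set Q := ((rho u @: W) :&: W)%VS.
have le_sum : (\dim (P + Q) <= \dim W)%N.
  rewrite -(dim_limg_rho u W); apply: dimvS.
  by rewrite subv_add capvSl andbT limgS // capvSr.
have le_cap : (P :&: Q <= (rho (mul u v) @: W) :&: W)%VS.
  rewrite /P lker0_img_cap ?lker_rho // limg_rho_mul.
  by apply: capvS; [exact: capvSl | exact: capvSr].
have := dimv_sum_cap P Q; rewrite dim_limg_rho => sum_cap.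
by rewrite addnC -sum_cap leq_add // dimvS.
Qed.

End Representation.

End Group.

Theorem mainTheorem2
  (G : Type) (mul : G -> G -> G) (inv : G -> G) (one : G)
  (HG : is_group mul inv one) (alpha : R)
  (Halpha0 : Rlt 0 alpha) (Halpha1 : Rle alpha 1) :
  (* (1) *)
  (forall (X : Type) (act : G -> X -> X), is_action mul one act ->
   forall (A : G -> Prop) (Y : X -> Prop) (nY : nat),
     (exists a, A a) -> card_is Y nY -> (0 < nY)%nat ->
     (exists m, card_is (act_set act (set_inv inv A) Y) m /\
        Rle (INR m) (Rmult (Rdiv (Rminus 3 alpha) 2) (INR nY))) ->
     (forall g, setsq mul (AAinv mul inv A) g -> SymSet act alpha Y g) /\
     (forall g, AAinv mul inv A g -> SymSet act alpha Y g)) /\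
  (* (2) *)
  (forall (k : fieldType) (V : vectType k) (rho : G -> 'End(V)), is_rep mul one rho ->
   forall (A : G -> Prop) (W : {vspace V}),
     (exists a, A a) -> W != 0%VS ->
     (exists U : {vspace V}, is_span_of rho (set_inv inv A) W U /\
        Rle (INR (\dim U)) (Rmult (Rdiv (Rminus 3 alpha) 2) (INR (\dim W)))) ->
     forall g, setsq mul (AAinv mul inv A) g -> SymSpace rho alpha W g).
Proof.
split.
- move=> X act Hact A Y n _ HY _ [m [HZ Hm]].
  have overlap g : AAinv mul inv A g ->
      exists k, card_is (act g @` Y `&` Y) k /\ (n + n <= m + k)%N.
    move=> [a [b [Aa [Ab ->]]]]; apply: (card_is_act_mulV HG Hact HY HZ);
    exact/image_act_sub_act_set/mem_set_inv.
  split=> [_ [u [v [/overlap [ku [Hku le_u]] [/overlap [kv [Hkv le_v]] ->]]]] | g].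
    have [k [Hk le_k]] := card_is_act_mul HG Hact HY Hku Hkv.
    exact: SymSet_intro Hk (alpha_le_overlap_mul Hm le_u le_v le_k).
  move=> /overlap [k [Hk le_k]].
  exact: SymSet_intro Hk (alpha_le_overlap Halpha1 Hm le_k).
- move=> K V rho Hrho A W _ _ [U [[AWU _] Hm]] _ [u [v [Au [Av ->]]]].
  have overlap g : AAinv mul inv A g ->
      (\dim W + \dim W <= \dim U + \dim ((rho g @: W) :&: W))%N.
    move=> [a [b [Aa [Ab ->]]]]; apply: (dim_cap_limg_mulV HG Hrho);
    by apply/subvP => _ /memv_imgP [w Ww ->]; apply/AWU/Ww/mem_set_inv.
  exact: alpha_le_overlap_mul Hm (overlap u Au) (overlap v Av)
    (dim_cap_limg_mul HG Hrho W u v).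
Qed.
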